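(* Let $1\le p\le q$ and $0\le a\le p$. The $SU(p,q)$-flag domain $D_a$ in the Grassmannian of $p$-planes in $\mathbb{C}^{p+q}$ is generically $1$-connected if and only if $p\le 2a\le q$.
   Context: Let $\langle\cdot,\cdot\rangle$ be a Hermitian form of signature $(p,q)$ on $\mathbb{C}^{p+q}$, $G=SL(p+q,\mathbb{C})$ and $G_0=SU(p,q)$ the subgroup preserving it. $Z$ is the Grassmannian of $p$-dimensional subspaces of $\mathbb{C}^{p+q}$ (irreducible compact Hermitian symmetric of type AIII). For $0\le a\le p$, $D_a$ is the open $G_0$-orbit of those $p$-planes on which $\langle\cdot,\cdot\rangle$ is nondegenerate of signature $(p-a,a)$. Generic $1$-connectivity: let $K_0\subset G_0$ be a maximal compact subgroup and $K$ its complexification; the base cycle $C_0$ is the $K_0$-orbit in $D_a$ that is a complex submanifold. For $z\in C_0$ let $Q_z\subset G$ be its isotropy group and $\mathcal{O}$ the unique open $Q_z$-orbit in $Z$. $D_a$ is generically $1$-connected if $C_0\cap\mathcal{O}\neq\emptyset$. *)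

From mathcomp Require Import all_boot all_algebra.
From mathcomp Require Import complex reals.
Set Implicit Arguments. Unset Strict Implicit. Unset Printing Implicit Defensive.
Import GRing.Theory Num.Theory.
Local Open Scope ring_scope.

Section FlagDomain.
Variables (R : realType) (p q : nat).
Local Notation C := (R[i]).
Local Notation n := (p + q)%N.

(* Points of Z = Gr(p, C^n) are represented by full-rank p x n matrices, the  *)
(* point being the row space; two matrices represent the same point iff      *)
(* their row spaces coincide ((M == M')%MS).  Row vectors are acted on from  *)
(* the right: v |-> v *m g, so a p-plane rowspace(z) goes to rowspace(z *m g).*)
Definition Zpt := 'M[C]_(p, n).

Definition hform (v w : 'rV[C]_n) : C :=
  \sum_(i < n) (if (i < p)%N then 1 else -1) * v 0 i * (w 0 i)^*.

Definition posdef k (M : 'M[C]_(k, n)) : Prop :=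
  forall u : 'rV[C]_k, u *m M != 0 -> 0 < hform (u *m M) (u *m M).
Definition negdef k (M : 'M[C]_(k, n)) : Prop :=
  forall u : 'rV[C]_k, u *m M != 0 -> hform (u *m M) (u *m M) < 0.

Definition has_signature (z : Zpt) (s t : nat) : Prop :=
  exists (P : 'M[C]_(s, n)) (N : 'M[C]_(t, n)),
    row_free P /\ row_free N /\ (col_mx P N == z)%MS /\
    (forall u v, hform (u *m P) (v *m N) = 0) /\
    posdef P /\ negdef N.

Definition Dom (a : nat) : Zpt -> Prop :=
  fun z => row_free z /\ has_signature z (p - a) a.

Definition inG (g : 'M[C]_n) : Prop := \det g = 1.
Definition inG0 (g : 'M[C]_n) : Prop :=
  inG g /\ forall u v : 'rV[C]_n, hform (u *m g) (v *m g) = hform u v.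
Definition blockdiag (g : 'M[C]_n) : Prop :=
  forall i j : 'I_n, (i < p)%N != (j < p)%N -> g i j = 0.
Definition inK0 (g : 'M[C]_n) : Prop :=
  inG0 g /\ forall u v : 'rV[C]_n,
    \sum_(i < n) (u *m g) 0 i * ((v *m g) 0 i)^* = \sum_(i < n) u 0 i * (v 0 i)^*.
Definition inK (g : 'M[C]_n) : Prop := inG g /\ blockdiag g.

Definition orbit (H : 'M[C]_n -> Prop) (z : Zpt) : Zpt -> Prop :=
  fun w => row_free w /\ exists g, H g /\ (w == z *m g)%MS.

(* Base cycle: the K_0-orbit in D_a which is a complex submanifold,          *)
(* characterized as a K_0-orbit contained in D_a that is K-stable.          *)
Definition base_cycle (a : nat) (C0 : Zpt -> Prop) : Prop :=
  (exists z0, row_free z0 /\ forall w, C0 w <-> orbit inK0 z0 w) /\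
  (forall w, C0 w -> Dom a w) /\
  (forall w g, C0 w -> inK g -> C0 (w *m g)).

Definition isotropy (z : Zpt) (g : 'M[C]_n) : Prop := inG g /\ (z *m g == z)%MS.

(* Openness of a set of points of Z, for the (quotient) topology of Z:       *)
(* the set of full-rank representing matrices is open in M_(p,n)(C).        *)
Definition Zopen (S : Zpt -> Prop) : Prop :=
  forall M, S M -> exists eps : C, 0 < eps /\
    forall M' : Zpt, row_free M' -> (forall i j, `|M' i j - M i j| < eps) -> S M'.

Definition is_open_orbit (H : 'M[C]_n -> Prop) (O : Zpt -> Prop) : Prop :=
  (exists w, row_free w /\ forall x, O x <-> orbit H w x) /\ Zopen O.

Definition generically_1_connected (a : nat) : Prop :=
  exists C0, base_cycle a C0 /\
    forall z, C0 z ->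
      exists O, is_open_orbit (isotropy z) O /\ exists w, C0 w /\ O w.

End FlagDomain.

(* For z in the base cycle C_0 and k in K, the plane z k lies in D_a, and a  *)
(* suitable block-diagonal k makes a subspace of z k whose dimension is the  *)
(* rank of the C^p-projection of z positive definite (resp. of the           *)
(* C^q-projection negative definite), so these ranks are at most p - a and a.*)
(* The open orbit of the isotropy group Q_z is the set of p-planes           *)
(* transversal to z: this set is open, SL acts transitively on transversal   *)
(* pairs, and every open Q_z-orbit contains a small perturbation that is     *)
(* transversal.  If C_0 meets it in w, then z + w has dimension 2p while its *)
(* projections have dimensions at most min(p, 2(p - a)) and min(q, 2a),      *)
(* forcing p <= 2a <= q.  Conversely, when p <= 2a <= q the base point       *)
(* spanned by e_1..e_(p-a), e_(p+1)..e_(p+a) is transversal to its image     *)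
(* under the order reversal inside each block, an element of K_0.            *)

From Pilot Require Import Defs.
From mathcomp Require Import all_boot all_order all_algebra zify.
From mathcomp Require Import complex reals.
From mathcomp Require Import sesquilinear spectral.
Set Implicit Arguments. Unset Strict Implicit. Unset Printing Implicit Defensive.
Import Order.TTheory GRing.Theory Num.Theory.
Local Open Scope ring_scope.
Local Open Scope sesquilinear_scope.

Section LinearAlgebra.
Variable F : fieldType.

(* The block matrix diag(G, 1) of size k, for G of size r <= k. *)
Definition embed_mx k r (G : 'M[F]_r) : 'M[F]_k :=
  pid_mx r *m G *m pid_mx r + copid_mx r.

Lemma pid_mul_embed_mx k r (G : 'M[F]_r) : (r <= k)%N ->
  (pid_mx r : 'M_(r, k)) *m embed_mx k G = G *m pid_mx r.
Proof.
move=> rk; rewrite /embed_mx mulmxDr mul_pid_mx_copid // addr0 !mulmxA mul_pid_mx.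
by rewrite minnn (minn_idPr rk) pid_mx_1 mul1mx.
Qed.

Lemma embed_mxM k r (G H : 'M[F]_r) : (r <= k)%N ->
  embed_mx k G *m embed_mx k H = embed_mx k (G *m H).
Proof.
move=> rk; rewrite {1}/embed_mx mulmxDl -!mulmxA pid_mul_embed_mx //.
rewrite /embed_mx mulmxDr !mulmxA.
by rewrite mul_copid_mx_pid // !mul0mx add0r copid_mx_id.
Qed.

Lemma embed_mx1 k r : embed_mx k (1%:M : 'M[F]_r) = 1%:M.
Proof. by rewrite /embed_mx mulmx1 mul_pid_mx !minnn /copid_mx addrC subrK. Qed.

Lemma embed_mx_unit k r (G : 'M[F]_r) : (r <= k)%N ->
  G \in unitmx -> embed_mx k G \in unitmx.
Proof.
move=> rk uG; have := @embed_mxM k r G (invmx G) rk.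
by rewrite mulmxV // embed_mx1 => /mulmx1_unit[].
Qed.

Lemma row_pid_mul s m k (A : 'M[F]_(m, k)) (i : 'I_s) (sm : (s <= m)%N) :
  row i (pid_mx s *m A) = row (widen_ord sm i) A.
Proof.
apply/rowP => j; rewrite !mxE (bigD1 (widen_ord sm i)) //= big1 ?addr0.
  by rewrite !mxE eqxx ltn_ord mul1r.
move=> l hl; rewrite !mxE; case: eqP => [h|]; last by rewrite mul0r.
by case/eqP: hl; apply/val_inj; rewrite /= h.
Qed.

Definition sel_mx m k (f : 'I_m -> 'I_k) : 'M[F]_(m, k) :=
  \matrix_(i, j) (j == f i)%:R.

Lemma sel_mx_free m k (f : 'I_m -> 'I_k) : injective f -> row_free (sel_mx f).
Proof.
move=> injf; apply: inj_row_free => v hv; apply/rowP => i.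
have := congr1 (fun M : 'rV[F]_k => M 0 (f i)) hv.
rewrite !mxE (bigD1 i) //= big1 ?addr0 => [|j ji]; first by rewrite !mxE eqxx mulr1.
by rewrite !mxE (inj_eq injf) eq_sym (negbTE ji) mulr0.
Qed.

Lemma sel_mxM m k l (f : 'I_m -> 'I_k) (g : 'I_k -> 'I_l) :
  sel_mx f *m sel_mx g = sel_mx (g \o f).
Proof.
apply/matrixP => i j; rewrite !mxE (bigD1 (f i)) //= big1 ?addr0.
  by rewrite !mxE eqxx mul1r.
by move=> x /negbTE xf; rewrite !mxE xf mul0r.
Qed.

Definition cat_ordfun m1 m2 k (f : 'I_m1 -> 'I_k) (g : 'I_m2 -> 'I_k)
    (i : 'I_(m1 + m2)) : 'I_k :=
  match split i with inl x => f x | inr y => g y end.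

Lemma cat_ordfun_inj m1 m2 k (f : 'I_m1 -> 'I_k) (g : 'I_m2 -> 'I_k) :
  injective f -> injective g -> (forall i j, f i != g j) ->
  injective (cat_ordfun f g).
Proof.
move=> hf hg hd x y; rewrite /cat_ordfun.
case: (split_ordP x) => x' ->; case: (split_ordP y) => y' ->.
- by move/hf ->.
- by move/eqP; rewrite (negbTE (hd _ _)).
- by move/eqP; rewrite eq_sym (negbTE (hd _ _)).
- by move/hg ->.
Qed.

Lemma col_sel_mx m1 m2 k (f : 'I_m1 -> 'I_k) (g : 'I_m2 -> 'I_k) :
  col_mx (sel_mx f) (sel_mx g) = sel_mx (cat_ordfun f g).
Proof.
apply/matrixP => i j; rewrite !mxE /cat_ordfun.
by case: (split i) => k'; rewrite !mxE.
Qed.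

Lemma mxrank_col_leq m1 m2 k (A : 'M[F]_(m1, k)) (B : 'M[F]_(m2, k)) :
  (\rank (col_mx A B) <= \rank A + \rank B)%N.
Proof. by rewrite -addsmxE; apply: mxrank_adds_leqif. Qed.

Lemma row_free_col_mx m1 m2 k (A : 'M[F]_(m1, k)) (B : 'M[F]_(m2, k)) :
  row_free (col_mx A B) -> row_free A /\ row_free B.
Proof.
rewrite /row_free => /eqP rAB; have := mxrank_col_leq A B; rewrite rAB.
by have := rank_leq_row A; have := rank_leq_row B; split; apply/eqP; lia.
Qed.

Lemma mxrank_hsub_leq m k1 k2 (X : 'M[F]_(m, k1 + k2)) :
  (\rank X <= \rank (lsubmx X) + \rank (rsubmx X))%N.
Proof.
rewrite -{1}[X]hsubmxK -mxrank_tr tr_row_mx.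
by apply: leq_trans (mxrank_col_leq _ _) _; rewrite !mxrank_tr.
Qed.

Lemma lsubmx_col m1 m2 k1 k2 (A : 'M[F]_(m1, k1 + k2)) (B : 'M[F]_(m2, k1 + k2)) :
  lsubmx (col_mx A B) = col_mx (lsubmx A) (lsubmx B).
Proof.
by apply/matrixP => i j; rewrite mxE; case: (split_ordP i) => k ->;
  rewrite ?col_mxEu ?col_mxEd mxE.
Qed.

Lemma rsubmx_col m1 m2 k1 k2 (A : 'M[F]_(m1, k1 + k2)) (B : 'M[F]_(m2, k1 + k2)) :
  rsubmx (col_mx A B) = col_mx (rsubmx A) (rsubmx B).
Proof.
by apply/matrixP => i j; rewrite mxE; case: (split_ordP i) => k ->;
  rewrite ?col_mxEu ?col_mxEd mxE.
Qed.

Lemma eqmx_col_mx m1 m2 m3 m4 k (A : 'M[F]_(m1, k)) (B : 'M[F]_(m2, k))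
    (A' : 'M[F]_(m3, k)) (B' : 'M[F]_(m4, k)) :
  (A :=: A')%MS -> (B :=: B')%MS -> (col_mx A B :=: col_mx A' B')%MS.
Proof.
move=> eA eB; apply: eqmx_trans (eqmx_sym (addsmxE A B)) _.
exact: eqmx_trans (adds_eqmx eA eB) (addsmxE _ _).
Qed.

Lemma mxrank_col_eqmx m1 m2 m3 m4 k (A : 'M[F]_(m1, k)) (B : 'M[F]_(m2, k))
    (A' : 'M[F]_(m3, k)) (B' : 'M[F]_(m4, k)) :
  (A :=: A')%MS -> (B :=: B')%MS -> \rank (col_mx A B) = \rank (col_mx A' B').
Proof. by move=> eA eB; rewrite (eqmx_col_mx eA eB). Qed.

Lemma eqmx_row_mx0 m1 m2 k1 k2 (X : 'M[F]_(m1, k1)) (Y : 'M[F]_(m2, k1)) :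
  (X :=: Y)%MS -> (row_mx X (0 : 'M_(m1, k2)) :=: row_mx Y (0 : 'M_(m2, k2)))%MS.
Proof.
have E m (Z : 'M[F]_(m, k1)) : row_mx Z (0 : 'M_(m, k2)) = Z *m row_mx 1%:M 0.
  by rewrite mul_mx_row mulmx1 mulmx0.
by move=> e; rewrite (E _ X) (E _ Y); apply: eqmxMr.
Qed.

Lemma eqmx_row_0mx m1 m2 k1 k2 (X : 'M[F]_(m1, k2)) (Y : 'M[F]_(m2, k2)) :
  (X :=: Y)%MS -> (row_mx (0 : 'M_(m1, k1)) X :=: row_mx (0 : 'M_(m2, k1)) Y)%MS.
Proof.
have E m (Z : 'M[F]_(m, k2)) : row_mx (0 : 'M_(m, k1)) Z = Z *m row_mx 0 1%:M.
  by rewrite mul_mx_row mulmx1 mulmx0.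
by move=> e; rewrite (E _ X) (E _ Y); apply: eqmxMr.
Qed.

Lemma mxrank_col_mulmx m k (z w w' : 'M[F]_(m, k)) (g : 'M[F]_k) : g \in unitmx ->
  (z *m g == z)%MS -> (w == w' *m g)%MS ->
  \rank (col_mx z w) = \rank (col_mx z w').
Proof.
move=> ug ez ew.
have e : (z + w :=: z *m g + w' *m g)%MS := adds_eqmx (eqmx_sym (eqmxP ez)) (eqmxP ew).
by rewrite -addsmxE e addsmxE -mul_col_mx mxrankMfree ?row_free_unit.
Qed.

Lemma exists_col_mx_free m k (z : 'M[F]_(m, k)) : row_free z -> (m + m <= k)%N ->
  exists E : 'M[F]_(m, k), row_free (col_mx z E).
Proof.
move=> fz mmk; have mZc : (m <= \rank (z^C)%MS)%N.
  by rewrite mxrank_compl (eqP fz) leq_subRL // (leq_trans (leq_addr m m)).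
set E : 'M_(m, k) := pid_mx m *m row_base (z^C)%MS.
have fE : row_free E by rewrite /row_free mxrankMfree ?row_base_free // rank_pid_mx.
have sE : (E <= z^C)%MS by rewrite (submx_trans (submxMl _ _)) // eq_row_base.
exists E; rewrite /row_free -addsmxE mxrank_disjoint_sum ?(eqP fz) ?(eqP fE) //.
apply/eqP; rewrite -submx0; apply: submx_trans (capmxS (submx_refl z) sE) _.
by rewrite capmx_compl submx_refl.
Qed.

(* With [Y] a right inverse of [col_mx z E], the rows of [col_mx z (w + t E)] *)
(* have coordinates [(1, 0), ( *, A + t)] in the basis (z, E), where          *)
(* [A := rsubmx (w *m Y)].                                                    *)
Lemma row_free_col_add_scale m k (z E w : 'M[F]_(m, k)) (t : F) :
  row_free (col_mx z E) ->
  ~~ eigenvalue (rsubmx (w *m pinvmx (col_mx z E))) (- t) ->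
  row_free (col_mx z (w + t *: E)).
Proof.
move=> fzE ht; set Y := pinvmx (col_mx z E); set A := rsubmx (w *m Y).
have [zY EY] : z *m Y = row_mx 1%:M 0 /\ E *m Y = row_mx 0 1%:M.
  by move: (mulmxVp fzE); rewrite mul_col_mx (scalar_mx_block m m) => /eq_col_mx.
apply: inj_row_free => v hv; rewrite -[v]hsubmxK mul_row_col in hv.
have vY0 : (lsubmx v *m z + rsubmx v *m (w + t *: E)) *m Y = 0 by rewrite hv mul0mx.
rewrite mulmxDl mulmxDr mulmxDl -!mulmxA zY -scalemxAl EY in vY0.
rewrite -[w *m Y]hsubmxK -/A scale_row_mx scaler0 scalemx1 !mul_mx_row in vY0.
rewrite !mul_mx_scalar !mulmx0 scale1r !add_row_mx -row_mx0 in vY0.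
have [_ vA] := eq_row_mx vY0.
have v2 : rsubmx v = 0.
  apply/eqP; apply: contraT => nz; case/negP: ht; apply/eigenvalueP.
  exists (rsubmx v) => //; apply/eqP; rewrite scaleNr -subr_eq0 opprK.
  by rewrite add0r in vA; rewrite vA.
rewrite v2 mul0mx addr0 in hv.
have [fz _] := row_free_col_mx fzE.
have v1 : lsubmx v = 0 by apply/eqP; rewrite -(mulmx_free_eq0 _ fz) hv.
by rewrite -[v]hsubmxK v1 v2 row_mx0.
Qed.

End LinearAlgebra.

Section Perturbation.
Variable K : numFieldType.

Lemma normr_entry_le_sum m k (M : 'M[K]_(m, k)) i j :
  `|M i j| <= \sum_i' \sum_j' `|M i' j'|.
Proof.
rewrite (bigD1 i) //= (bigD1 j) //= -addrA lerDl addr_ge0 //.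
  by apply: sumr_ge0 => l _; rewrite normr_ge0.
by apply: sumr_ge0 => l _; apply: sumr_ge0 => l' _; rewrite normr_ge0.
Qed.

Lemma row_free_add1_small m (D : 'M[K]_m) (d : K) : 0 <= d -> m%:R * d < 1 ->
  (forall i j, `|D i j| <= d) -> row_free (1%:M + D).
Proof.
move=> d0 md hD; apply: inj_row_free => v hv.
have hv' : v = - (v *m D).
  by apply/eqP; rewrite -addr_eq0 -{1}[v]mulmx1 -mulmxDr hv.
set S := \sum_k `|v 0 k|.
have S0 : 0 <= S by apply: sumr_ge0 => k _; rewrite normr_ge0.
have hk k : `|v 0 k| <= d * S.
  rewrite {1}hv' mxE normrN mxE (le_trans (ler_norm_sum _ _ _)) //.
  rewrite /S mulr_sumr; apply: ler_sum => j _; rewrite normrM mulrC.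
  by rewrite ler_wpM2r ?normr_ge0.
have hS : S <= m%:R * d * S.
  rewrite /S; apply: le_trans (ler_sum _ (fun k _ => hk k)) _.
  by rewrite sumr_const card_ord -/S -mulrA mulr_natl.
have : (1 - m%:R * d) * S <= 0 by rewrite mulrBl mul1r subr_le0.
rewrite pmulr_rle0 ?subr_gt0 // => Sle.
have {}S0 : S = 0 by apply/eqP; rewrite eq_le Sle S0.
apply/rowP => k; rewrite mxE; apply/eqP; rewrite -normr_eq0; apply/eqP.
by apply: (psumr_eq0P _ S0) => // j _; rewrite normr_ge0.
Qed.

(* The perturbation is measured against the right inverse [Y] of [M]:      *)
(* [M' *m Y = 1 + (M' - M) *m Y] stays invertible for small [M' - M].       *)
Lemma row_free_open m k (M : 'M[K]_(m, k)) : row_free M ->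
  exists2 eps : K, 0 < eps &
    forall M' : 'M[K]_(m, k), (forall i j, `|M' i j - M i j| < eps) -> row_free M'.
Proof.
move=> fM; set Y := pinvmx M; have hY : M *m Y = 1%:M := mulmxVp fM.
set SY := \sum_i \sum_j `|Y i j|.
have SY0 : 0 <= SY.
  by apply: sumr_ge0 => i _; apply: sumr_ge0 => j _; rewrite normr_ge0.
set eps := ((m.+1)%:R * (SY + 1))^-1.
have eps0 : 0 < eps by rewrite invr_gt0 mulr_gt0 ?ltr0n // ltr_wpDl.
exists eps => // M' hM'.
have eM : M' *m Y = 1%:M + (M' - M) *m Y by rewrite mulmxDl mulNmx hY addrC subrK.
have hD i j : `|((M' - M) *m Y) i j| <= eps * SY.
  rewrite mxE; apply: le_trans (ler_norm_sum _ _ _) _.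
  apply: le_trans (_ : \sum_l eps * `|Y l j| <= _).
    apply: ler_sum => l _; rewrite normrM ler_wpM2r ?normr_ge0 //.
    by rewrite !mxE; apply/ltW/hM'.
  rewrite -mulr_sumr ler_wpM2l ?(ltW eps0) //; apply: ler_sum => l _.
  by rewrite (bigD1 j) //= lerDl; apply: sumr_ge0 => i' _; rewrite normr_ge0.
have md : m%:R * (eps * SY) < 1.
  have e1 : eps * (SY + 1) = (m.+1)%:R^-1.
    by rewrite /eps invfM -mulrA mulVf ?mulr1 // lt0r_neq0 // ltr_wpDl.
  apply: le_lt_trans (_ : m%:R * (eps * (SY + 1)) < 1).
    by rewrite ler_wpM2l ?ler0n // ler_wpM2l ?(ltW eps0) // lerDl ler01.
  by rewrite e1 ltr_pdivrMr ?ltr0n // mul1r ltr_nat.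
have fD := row_free_add1_small (mulr_ge0 (ltW eps0) SY0) md hD.
rewrite /row_free eqn_leq rank_leq_row /=.
by have := mxrankM_maxl M' Y; rewrite eM (eqP fD).
Qed.

Lemma exists_small_non_eigenvalue m (A : 'M[K]_m) (c : K) : 0 < c ->
  exists2 t : K, 0 < t <= c & ~~ eigenvalue A (- t).
Proof.
move=> c0; set rs := [seq - (c / (k.+1)%:R) | k <- iota 0 m.+1].
have : ~~ all (root (char_poly A)) rs.
  apply/negP => hall.
  have uq : uniq rs.
    rewrite map_inj_uniq ?iota_uniq // => k1 k2 h.
    have : (k1.+1)%:R^-1 = (k2.+1)%:R^-1 :> K.
      by apply: (mulfI (negbT (gt_eqF c0))); apply: oppr_inj.
    by move/invr_inj/eqP; rewrite eqr_nat => /eqP [].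
  have := max_poly_roots (monic_neq0 (char_poly_monic A)) hall uq.
  by rewrite size_char_poly size_map size_iota ltnn.
case/allPn => x /mapP [k _ ->] hk; exists (c / (k.+1)%:R).
  by rewrite divr_gt0 ?ltr0n //= ler_pdivrMr ?ltr0n // ler_pMr // ler1n.
by rewrite eigenvalue_root_char.
Qed.

Lemma exists_near_col_mx_free m k (z w : 'M[K]_(m, k)) (eps : K) :
  row_free z -> (m + m <= k)%N -> 0 < eps ->
  exists2 w' : 'M[K]_(m, k),
    forall i j, `|w' i j - w i j| < eps & row_free (col_mx z w').
Proof.
move=> fz mmk eps0; have [E fzE] := exists_col_mx_free fz mmk.
set SE := \sum_i \sum_j `|E i j|.
have SE0 : 0 <= SE.
  by apply: sumr_ge0 => i _; apply: sumr_ge0 => j _; rewrite normr_ge0.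
have SE1 : 0 < SE + 1 by rewrite ltr_wpDl.
set A := rsubmx (w *m pinvmx (col_mx z E)).
have [t /andP[t0 tle] ht] := exists_small_non_eigenvalue A (divr_gt0 eps0 SE1).
exists (w + t *: E); last exact: row_free_col_add_scale.
move=> i j; rewrite !mxE addrAC subrr add0r normrM ger0_norm ?ltW //.
apply: le_lt_trans (ler_wpM2l (ltW t0) (normr_entry_le_sum E i j)) _.
apply: le_lt_trans (ler_wpM2r SE0 tle) _.
by rewrite mulrAC ltr_pdivrMr // ltr_pM2l // ltrDl ltr01.
Qed.

End Perturbation.

Section ComplexMatrices.
Variable C : numClosedFieldType.

Lemma trmxC_mul m k l (A : 'M[C]_(m, k)) (B : 'M_(k, l)) : (A *m B)^t* = B^t* *m A^t*.
Proof. by rewrite trmx_mul map_mxM. Qed.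

Lemma trmxC_scale m k (c : C) (A : 'M[C]_(m, k)) : (c *: A)^t* = c^* *: A^t*.
Proof. by apply/matrixP => i j; rewrite !mxE rmorphM. Qed.

Lemma trmxC_pid m k r : (pid_mx r : 'M[C]_(m, k))^t* = pid_mx r.
Proof. by rewrite tr_pid_mx map_pid_mx. Qed.

Lemma sel_mx_mul_trmxC m1 m2 k (f : 'I_m1 -> 'I_k) (g : 'I_m2 -> 'I_k) :
  sel_mx C f *m (sel_mx C g)^t* = \matrix_(i, j) (f i == g j)%:R.
Proof.
apply/matrixP => i j; rewrite !mxE (bigD1 (f i)) //= big1 ?addr0.
  by rewrite !mxE eqxx mul1r rmorph_nat.
by move=> x /negbTE xf; rewrite !mxE xf mul0r.
Qed.

Lemma eqmx_pid_schmidt s m (A : 'M[C]_m) : (s <= m)%N -> A \in unitmx ->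
  ((pid_mx s : 'M_(s, m)) *m A :=: (pid_mx s : 'M_(s, m)) *m schmidt A)%MS.
Proof.
move=> sm uA; have uS : schmidt A \in unitmx.
  by apply: unitarymx_unit; apply: schmidt_unitarymx.
apply/eqmxP; rewrite -mxrank_leqif_eq.
  by rewrite !mxrankMfree ?row_free_unit // rank_pid_mx.
apply/row_subP => i; rewrite row_pid_mul.
apply: submx_trans (row_schmidt_sub _ _) _.
apply/sumsmx_subP => k /= hk; rewrite genmxE.
have ks : (k < s)%N by apply: leq_ltn_trans hk _.
have -> : row k (schmidt A) = row (Ordinal ks) (pid_mx s *m schmidt A).
  by rewrite row_pid_mul; congr row; apply/val_inj.
exact: row_sub.
Qed.

Lemma mul_rV_pid_mxE r t (u : 'rV[C]_r) j :
  (u *m (pid_mx t : 'M_r)) 0 j = (j < t)%:R * u 0 j.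
Proof.
rewrite !mxE (bigD1 j) //= big1 ?addr0; first by rewrite !mxE eqxx mulrC.
move=> l lj; rewrite !mxE; case: eqP => [h|]; last by rewrite mulr0.
by case/eqP: lj; apply/val_inj.
Qed.

Lemma dotmx_pid_bounds r t (u : 'rV[C]_r) :
  0 <= (u *m pid_mx t *m u^t*) 0 0 <= (u *m u^t*) 0 0.
Proof.
rewrite !mxE; apply/andP; split.
  apply: sumr_ge0 => j _; rewrite mul_rV_pid_mxE !mxE -mulrA.
  by rewrite mulr_ge0 ?ler0n ?mul_conjC_ge0.
apply: ler_sum => j _; rewrite mul_rV_pid_mxE !mxE; case: (j < t)%N; rewrite ?mul1r //.
by rewrite !mul0r mul_conjC_ge0.
Qed.

Lemma dotmx_gt0 r (u : 'rV[C]_r) : u != 0 -> 0 < (u *m u^t*) 0 0.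
Proof. by move=> /dotmx_is_dotmx; rewrite dotmxE. Qed.

Lemma gram_mul_pid k r s (u : 'rV[C]_r) :
  (u *m (pid_mx s : 'M_(r, k))) *m (u *m pid_mx s)^t* = u *m pid_mx (minn k s) *m u^t*.
Proof. by rewrite trmxC_mul trmxC_pid !mulmxA -(mulmxA u) mul_pid_mx minnn. Qed.

Lemma gram_mul_pid_full k r (u : 'rV[C]_r) : (r <= k)%N ->
  (u *m (pid_mx r : 'M_(r, k))) *m (u *m pid_mx r)^t* = u *m u^t*.
Proof. by move=> rk; rewrite gram_mul_pid (minn_idPr rk) pid_mx_1 mulmx1. Qed.

Lemma unitary_det_norm1 m (g : 'M[C]_m) : g \is unitarymx -> `|\det g| = 1.
Proof.
move=> /unitarymxP h; have : `|\det g| ^+ 2 = 1.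
  rewrite normCK; have -> : (\det g)^* = \det (g^t*) by rewrite det_map_mx det_tr.
  by rewrite -det_mulmx h det1.
by move/eqP; rewrite sqrp_eq1 ?normr_ge0 // => /eqP.
Qed.

(* Rescaling by an m-th root of the inverse determinant lands in SL_m. *)
Lemma det1_rescale m (g : 'M[C]_m) : (0 < m)%N -> g \in unitmx ->
  exists c : C, [/\ c != 0, \det (c *: g) = 1 & (`|\det g| = 1 -> c * c^* = 1)].
Proof.
move=> m0 ug; have d0 : \det g != 0 by rewrite -unitfE -unitmxE.
exists (m.-root (\det g)^-1); split.
- apply: contra_neq (invr_neq0 d0) => h.
  by rewrite -(rootCK m0 (\det g)^-1) h expr0n eqn0Ngt m0.
- by rewrite detZ rootCK // mulVf.
- by move=> h; rewrite -normCK norm_rootC normfV h invr1 rootC1 // expr1n.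
Qed.

Lemma transversal_pair_transitive m k (z w x : 'M[C]_(m, k)) :
  (0 < k)%N -> (m + m <= k)%N ->
  row_free (col_mx z w) -> row_free (col_mx z x) ->
  exists g, [/\ \det g = 1, (z *m g == z)%MS & (x == w *m g)%MS].
Proof.
move=> k0 mmk /eqP rM /eqP rM'.
set M := col_mx z w; set M' := col_mx z x.
(* [g0] matches the Gaussian-elimination factorizations of M and M'. *)
set g0 := invmx (row_ebase M) *m
  embed_mx k (invmx (col_ebase M) *m col_ebase M') *m row_ebase M'.
have hg0 : M *m g0 = M'.
  rewrite /g0 !mulmxA -{1}(mulmx_ebase M) rM mulmxK ?row_ebase_unit //.
  rewrite -(mulmxA (col_ebase M)) pid_mul_embed_mx // !mulmxA mulmxV ?col_ebase_unit //.
  by rewrite mul1mx; have := mulmx_ebase M'; rewrite rM'.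
have ug0 : g0 \in unitmx.
  rewrite !unitmx_mul unitmx_inv !row_ebase_unit /= andbT embed_mx_unit //.
  by rewrite unitmx_mul unitmx_inv !col_ebase_unit.
have [c [c0 dc _]] := det1_rescale k0 ug0.
move: hg0; rewrite mul_col_mx => /eq_col_mx[ez ew].
exists (c *: g0); split=> //; rewrite -scalemxAr; apply/eqmxP.
  by rewrite ez; apply: eqmx_scale.
by rewrite ew; apply/eqmx_sym/eqmx_scale.
Qed.

Lemma normal_form_pair m m1 m2 (X1 : 'M[C]_(m, m1)) (X2 : 'M[C]_(m, m2)) (c : C) :
  c != 0 ->
  exists (L : 'M[C]_(\rank X1, m)) (A : 'M[C]_m1) (B : 'M[C]_m2) (s : nat),
  [/\ A \in unitmx, B \in unitmx, L *m X1 *m A = pid_mx (\rank X1)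
    & L *m X2 *m B = c *: pid_mx s].
Proof.
move=> c0; set r := \rank X1.
have rm : (r <= m)%N := rank_leq_row X1.
have rm1 : (r <= m1)%N := rank_leq_col X1.
set C1 := col_ebase X1; set R1 := row_ebase X1.
set E0 : 'M_(r, m) := pid_mx r *m invmx C1.
have hE0 : E0 *m X1 = pid_mx r *m R1.
  rewrite -{1}(mulmx_ebase X1) /E0 !mulmxA mulmxKV ?col_ebase_unit //.
  by rewrite mul_pid_mx minnn (minn_idPr rm).
set W := E0 *m X2; set CW := col_ebase W; set RW := row_ebase W.
exists (invmx CW *m E0), (invmx R1 *m embed_mx m1 CW), (c *: invmx RW), (\rank W).
split.
- by rewrite unitmx_mul unitmx_inv row_ebase_unit embed_mx_unit // col_ebase_unit.
- by rewrite unitmxZ ?unitmx_inv ?row_ebase_unit // unitfE.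
- rewrite -(mulmxA (invmx CW)) hE0 -!mulmxA mulKVmx ?row_ebase_unit //.
  by rewrite pid_mul_embed_mx // mulKmx ?col_ebase_unit.
- have -> : invmx CW *m E0 *m X2 = pid_mx (\rank W) *m RW.
    by rewrite -mulmxA -/W -{1}(mulmx_ebase W) -!mulmxA mulKmx ?col_ebase_unit.
  by rewrite -scalemxAr -mulmxA mulmxV ?row_ebase_unit // mulmx1.
Qed.

Lemma delta_mx_form n (X : 'M[C]_n) (i j : 'I_n) :
  ((delta_mx 0 i : 'rV[C]_n) *m X *m (delta_mx 0 j : 'rV[C]_n)^t*) 0 0 = X i j.
Proof.
have -> : (delta_mx 0 i : 'rV[C]_n) *m X = row i X.
  apply/rowP => k; rewrite !mxE (bigD1 i) //= big1 ?addr0.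
    by rewrite !mxE !eqxx mul1r.
  by move=> l hl; rewrite !mxE (negbTE hl) mul0r.
rewrite mxE (bigD1 j) //= big1 ?addr0; first by rewrite !mxE !eqxx rmorph1 mulr1.
by move=> k hk; rewrite !mxE (negbTE hk) rmorph0 mulr0.
Qed.

Lemma form_mx_inj n (A B : 'M[C]_n) :
  (forall u v : 'rV[C]_n, (u *m A *m v^t*) 0 0 = (u *m B *m v^t*) 0 0) -> A = B.
Proof.
move=> H; apply/matrixP => i j; have := H (delta_mx 0 i) (delta_mx 0 j).
by rewrite !delta_mx_form.
Qed.

Lemma dotE m (u v : 'rV[C]_m) : \sum_(i < m) u 0 i * (v 0 i)^* = (u *m v^t*) 0 0.
Proof. by rewrite mxE; apply: eq_bigr => j _; rewrite !mxE. Qed.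

End ComplexMatrices.

Section HermitianForm.
Variables (R : realType) (p q : nat).
Local Notation C := (R[i]).
Local Notation n := (p + q)%N.

Definition sgn (j : 'I_n) : C := if (j < p)%N then 1 else -1.
Definition Jmx : 'M[C]_n := diag_mx (\row_j sgn j).

Lemma mulmx_JmxE m (u : 'M[C]_(m, n)) i j : (u *m Jmx) i j = u i j * sgn j.
Proof. by rewrite mul_mx_diag !mxE. Qed.

Lemma mul_JmxE m (u : 'M[C]_(n, m)) i j : (Jmx *m u) i j = sgn i * u i j.
Proof. by rewrite mul_diag_mx !mxE. Qed.

Lemma hformE (u v : 'rV[C]_n) : hform u v = (u *m Jmx *m v^t*) 0 0.
Proof.
rewrite /hform mxE; apply: eq_bigr => j _; rewrite mulmx_JmxE !mxE /sgn.
by rewrite [_ * u 0 j]mulrC.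
Qed.

Lemma hform0 : hform (0 : 'rV[C]_n) 0 = 0.
Proof. by rewrite hformE !mul0mx mxE. Qed.

Lemma hform_row (a c : 'rV[C]_p) (b d : 'rV[C]_q) :
  hform (row_mx a b) (row_mx c d) = (a *m c^t*) 0 0 - (b *m d^t*) 0 0.
Proof.
rewrite /hform big_split_ord /= -!dotE -sumrN; congr (_ + _); apply: eq_bigr => j _.
  by rewrite !row_mxEl ltn_ord mul1r.
by rewrite !row_mxEr ltnNge leq_addr /= mulN1r mulNr.
Qed.

Lemma blockdiag_block (A : 'M[C]_p) (B : 'M[C]_q) : blockdiag (block_mx A 0 0 B).
Proof.
move=> i j; case: (split_ordP i) => i' ->; case: (split_ordP j) => j' ->;
  rewrite ?block_mxEul ?block_mxEur ?block_mxEdl ?block_mxEdr ?mxE //=;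
  by rewrite ?ltn_ord ?(ltnNge _ p) ?leq_addr.
Qed.

Lemma blockdiagE (g : 'M[C]_n) :
  blockdiag g -> g = block_mx (ulsubmx g) 0 0 (drsubmx g).
Proof.
move=> b; rewrite -{1}[g]submxK; congr block_mx; apply/matrixP => i j.
  by rewrite !mxE b //= ltn_ord ltnNge leq_addr.
by rewrite !mxE b //= ltn_ord ltnNge leq_addr.
Qed.

Lemma blockdiag_scale (c : C) (g : 'M[C]_n) : blockdiag g -> blockdiag (c *: g).
Proof. by move=> b i j h; rewrite mxE b // mulr0. Qed.

Lemma blockdiagM (g h : 'M[C]_n) : blockdiag g -> blockdiag h -> blockdiag (g *m h).
Proof.
move=> bg bh; rewrite (blockdiagE bg) (blockdiagE bh) mulmx_block.
by rewrite !mulmx0 !mul0mx !addr0 !add0r; apply: blockdiag_block.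
Qed.

Lemma blockdiag_Jmx (g : 'M[C]_n) : blockdiag g -> g *m Jmx = Jmx *m g.
Proof.
move=> bg; apply/matrixP => i j; rewrite mulmx_JmxE mul_JmxE /sgn.
case: (boolP ((i < p)%N == (j < p)%N)) => [/eqP ->|h]; first by rewrite mulrC.
by rewrite bg // mul0r mulr0.
Qed.

Lemma unitary_block (A : 'M[C]_p) (B : 'M[C]_q) :
  A \is unitarymx -> B \is unitarymx -> block_mx A 0 0 B \is unitarymx.
Proof.
move=> /unitarymxP hA /unitarymxP hB; apply/unitarymxP.
rewrite tr_block_mx map_block_mx !trmx0 !map_mx0 mulmx_block.
by rewrite !mulmx0 !mul0mx !addr0 !add0r hA hB -scalar_mx_block.
Qed.

Lemma inK0P (g : 'M[C]_n) :
  inK0 g <-> [/\ \det g = 1, g \is unitarymx & blockdiag g].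
Proof.
split=> [[[dg hg] sg]|[dg /unitarymxP ug bg]].
  have ug : g *m g^t* = 1%:M.
    by apply: form_mx_inj => u v; have := sg u v; rewrite !dotE trmxC_mul !mulmxA mulmx1.
  have hJ : g *m Jmx *m g^t* = Jmx.
    by apply: form_mx_inj => u v; have := hg u v; rewrite !hformE trmxC_mul !mulmxA.
  have gJ : g *m Jmx = Jmx *m g.
    by rewrite -[g *m Jmx]mulmx1 -(mulmx1C ug) !mulmxA hJ.
  split=> //; first exact/unitarymxP.
  move=> i j h; have := congr1 (fun M : 'M[C]_n => M i j) gJ.
  rewrite /= mulmx_JmxE mul_JmxE /sgn; move: h.
  case: (i < p)%N; case: (j < p)%N => //= _;
    rewrite ?mulrN1 ?mul1r ?mulr1 ?mulN1r => /eqP; rewrite ?eqNr; first by move/eqP.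
  by rewrite eq_sym eqNr => /eqP.
split; last by move=> u v; rewrite !dotE trmxC_mul mulmxA -(mulmxA u) ug mulmx1.
split=> // u v; rewrite !hformE trmxC_mul !mulmxA -(mulmxA u) blockdiag_Jmx //.
by rewrite mulmxA -(mulmxA (u *m Jmx)) ug mulmx1.
Qed.

Lemma inK0_blockdiag (g : 'M[C]_n) : inK0 g -> blockdiag g.
Proof. by case/inK0P. Qed.

Lemma inK0_1 : inK0 (1%:M : 'M[C]_n).
Proof.
apply/inK0P; split; first exact: det1.
  by apply/unitarymxP; rewrite trmx1 map_mx1 mulmx1.
by move=> i j h; rewrite mxE; case: eqP => // e; rewrite e eqxx in h.
Qed.

Lemma inK0M (g h : 'M[C]_n) : inK0 g -> inK0 h -> inK0 (g *m h).
Proof.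
move=> [[dg hg] sg] [[dh hh] sh]; split; [split|].
- by rewrite /inG det_mulmx dg dh mulr1.
- by move=> u v; rewrite !mulmxA hh hg.
- by move=> u v; rewrite !mulmxA sh sg.
Qed.

Lemma inK0_rescale (g : 'M[C]_n) : (0 < p)%N -> g \is unitarymx -> blockdiag g ->
  exists2 c : C, c != 0 & inK0 (c *: g).
Proof.
move=> p0 ug bg; have [c [c0 dc cc]] := det1_rescale (ltn_addr q p0) (unitarymx_unit ug).
exists c => //; apply/inK0P; split=> //; last exact: blockdiag_scale.
apply/unitarymxP; rewrite trmxC_scale -scalemxAl -scalemxAr (unitarymxP ug).
by rewrite scalerA cc ?scale1r // unitary_det_norm1.
Qed.

Lemma sel_mx_Jmx m1 m2 (f : 'I_m1 -> 'I_n) (g : 'I_m2 -> 'I_n) :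
  sel_mx C f *m Jmx *m (sel_mx C g)^t* =
  \matrix_(i, k) ((f i == g k)%:R * sgn (g k)).
Proof.
apply/matrixP => i k; rewrite mxE [RHS]mxE (bigD1 (f i)) //= big1 ?addr0.
  rewrite mulmx_JmxE !mxE eqxx mul1r rmorph_nat eq_sym.
  by case: eqP => [->|]; rewrite ?mulr0 ?mul0r // mulrC.
by move=> j hj; rewrite mulmx_JmxE !mxE (negbTE hj) !mul0r.
Qed.

Lemma hform_sel_mx m1 m2 (f : 'I_m1 -> 'I_n) (g : 'I_m2 -> 'I_n) u v :
  hform (u *m sel_mx C f) (v *m sel_mx C g) =
  (u *m (sel_mx C f *m Jmx *m (sel_mx C g)^t*) *m v^t*) 0 0.
Proof. by rewrite hformE trmxC_mul !mulmxA. Qed.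

End HermitianForm.

Section Signature.
Variables (R : realType) (p q : nat).
Local Notation C := (R[i]).
Local Notation n := (p + q)%N.

Lemma has_signature_eqmx (x y : 'M[C]_(p, n)) s t :
  (x == y)%MS -> has_signature y s t -> has_signature x s t.
Proof.
move=> /eqmxP exy [P [N [fP [fN [e hPN]]]]]; exists P, N; do 3!split=> //.
exact/eqmxP/(eqmx_trans (eqmxP e))/eqmx_sym.
Qed.

Lemma has_signature_mulmx (y : 'M[C]_(p, n)) s t (g : 'M[C]_n) : g \in unitmx ->
  (forall u v, hform (u *m g) (v *m g) = hform u v) ->
  has_signature y s t -> has_signature (y *m g) s t.
Proof.
move=> ug hg [P [N [fP [fN [e [o [pP nN]]]]]]].
exists (P *m g), (N *m g); split; [|split; [|split; [|split; [|split]]]].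
- by rewrite /row_free mxrankMfree ?row_free_unit.
- by rewrite /row_free mxrankMfree ?row_free_unit.
- by rewrite -mul_col_mx; apply/eqmxP/eqmxMr/eqmxP.
- by move=> u v; rewrite !mulmxA hg.
- move=> u; rewrite !mulmxA hg => h; apply: pP.
  by apply: contraNneq h => ->; rewrite mul0mx.
- move=> u; rewrite !mulmxA hg => h; apply: nN.
  by apply: contraNneq h => ->; rewrite mul0mx.
Qed.

Lemma posdef_negdef_cap0 k l (V : 'M[C]_(k, n)) (W : 'M[C]_(l, n)) :
  posdef V -> negdef W -> (V :&: W)%MS = 0.
Proof.
move=> pV nW; apply/eqP/rowV0P => v; rewrite sub_capmx => /andP[/submxP[u ->]].
case/submxP=> w ew; apply/eqP; apply: contraT => v0.
have := pV u v0; have := nW w; rewrite -ew => /(_ v0) neg pos.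
by have := lt_trans neg pos; rewrite ltxx.
Qed.

Lemma anisotropic_row_free k (V : 'M[C]_(k, n)) :
  (forall u, u != 0 -> hform (u *m V) (u *m V) != 0) -> row_free V.
Proof.
move=> hV; apply: inj_row_free => u h; apply/eqP; apply: contraT => u0.
by have := hV u u0; rewrite h hform0 eqxx.
Qed.

Lemma has_signature_posdef_rank (y : 'M[C]_(p, n)) s t r (V : 'M[C]_(r, n)) :
  has_signature y s t -> (V <= y)%MS ->
  (forall u, u != 0 -> 0 < hform (u *m V) (u *m V)) -> (r + t <= p)%N.
Proof.
move=> [P [N [_ [fN [/eqmxP e [_ [_ nN]]]]]]] sV hV.
have fV : row_free V by apply: anisotropic_row_free => u /hV /lt0r_neq0.
have pV : posdef V.
  by move=> u uV0; apply: hV; apply: contraNneq uV0 => ->; rewrite mul0mx.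
rewrite -(eqP fV) -(eqP fN) -mxrank_disjoint_sum ?(posdef_negdef_cap0 pV nN) //.
have /andP[_ sN] : (P <= y)%MS && (N <= y)%MS by rewrite -col_mx_sub e submx_refl.
by apply: leq_trans (rank_leq_row y); rewrite mxrankS // addsmx_sub sV.
Qed.

Lemma has_signature_negdef_rank (y : 'M[C]_(p, n)) s t r (V : 'M[C]_(r, n)) :
  has_signature y s t -> (V <= y)%MS ->
  (forall u, u != 0 -> hform (u *m V) (u *m V) < 0) -> (r + s <= p)%N.
Proof.
move=> [P [N [fP [_ [/eqmxP e [_ [pP _]]]]]]] sV hV.
have fV : row_free V by apply: anisotropic_row_free => u /hV /ltr0_neq0.
have nV : negdef V.
  by move=> u uV0; apply: hV; apply: contraNneq uV0 => ->; rewrite mul0mx.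
rewrite -(eqP fV) -(eqP fP) -mxrank_disjoint_sum; last first.
  by rewrite capmxC (posdef_negdef_cap0 pP nV).
have /andP[sP _] : (P <= y)%MS && (N <= y)%MS by rewrite -col_mx_sub e submx_refl.
by apply: leq_trans (rank_leq_row y); rewrite mxrankS // addsmx_sub sV.
Qed.

End Signature.

Section BaseCycleBounds.
Variables (R : realType) (p q : nat).
Local Notation C := (R[i]).
Local Notation n := (p + q)%N.

Lemma mul_row_block_diag m (X1 : 'M[C]_(m, p)) (X2 : 'M[C]_(m, q))
    (A : 'M[C]_p) (B : 'M[C]_q) :
  row_mx X1 X2 *m block_mx A 0 0 B = row_mx (X1 *m A) (X2 *m B).
Proof. by rewrite mul_row_block !mulmx0 addr0 add0r. Qed.

Lemma block_diag_unit (A : 'M[C]_p) (B : 'M[C]_q) :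
  A \in unitmx -> B \in unitmx -> block_mx A 0 0 B \in unitmx.
Proof. by move=> uA uB; rewrite unitmxE det_ublock unitrM -!unitmxE uA uB. Qed.

Lemma half_conj_lt1 : (2^-1 : C) * (2^-1)^* < 1.
Proof.
have h : (2^-1 : C) < 1 by rewrite invf_lt1 ?ltr0n // ltr1n.
by rewrite fmorphV rmorph_nat mulr_ilt1 // ?invr_ge0 ?ler0n.
Qed.

(* The form evaluates to [|u|^2 - |c|^2 |u_(<s)|^2]. *)
Lemma hform_pid_row_gt0 r s (c : C) (u : 'rV[C]_r) : (r <= p)%N ->
  c * c^* < 1 -> u != 0 ->
  0 < hform (u *m row_mx (pid_mx r : 'M_(r, p)) (c *: (pid_mx s : 'M_(r, q))))
            (u *m row_mx (pid_mx r : 'M_(r, p)) (c *: (pid_mx s : 'M_(r, q)))).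
Proof.
move=> rp c1 u0; rewrite mul_mx_row hform_row gram_mul_pid_full // -scalemxAr.
rewrite trmxC_scale -scalemxAl -scalemxAr scalerA gram_mul_pid [X in _ - X]mxE.
have /andP[_ le_u] := dotmx_pid_bounds (minn q s) u.
rewrite subr_gt0; apply: le_lt_trans (ler_wpM2l (mul_conjC_ge0 c) le_u) _.
by rewrite gtr_pMl // dotmx_gt0.
Qed.

Lemma hform_pid_row_lt0 r s (c : C) (u : 'rV[C]_r) : (r <= q)%N ->
  c * c^* < 1 -> u != 0 ->
  hform (u *m row_mx (c *: (pid_mx s : 'M_(r, p))) (pid_mx r : 'M_(r, q)))
        (u *m row_mx (c *: (pid_mx s : 'M_(r, p))) (pid_mx r : 'M_(r, q))) < 0.
Proof.
move=> rq c1 u0; rewrite mul_mx_row hform_row gram_mul_pid_full // -scalemxAr.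
rewrite trmxC_scale -scalemxAl -scalemxAr scalerA gram_mul_pid [X in X - _]mxE.
have /andP[_ le_u] := dotmx_pid_bounds (minn p s) u.
rewrite subr_lt0; apply: le_lt_trans (ler_wpM2l (mul_conjC_ge0 c) le_u) _.
by rewrite gtr_pMl // dotmx_gt0.
Qed.

Section BaseCycle.
Variables (a : nat) (C0 : 'M[C]_(p, n) -> Prop).
Hypotheses (p_gt0 : (0 < p)%N) (C0_base : base_cycle a C0).

Lemma base_cycle_signature x (k : 'M[C]_n) : C0 x -> k \in unitmx -> blockdiag k ->
  has_signature (x *m k) (p - a) a.
Proof.
case: C0_base => _ [C0D C0K] Cx uk bk.
have [c [c0 dc _]] := det1_rescale (ltn_addr q p_gt0) uk.
have [_] := C0D _ (C0K _ _ Cx (conj dc (blockdiag_scale c bk))).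
by apply: has_signature_eqmx; rewrite -scalemxAr; apply/eqmxP/eqmx_sym/eqmx_scale.
Qed.

(* Row operations on x and a suitable element of K produce [rank (lsubmx x)] *)
(* vectors of x k spanning a positive definite space.                       *)
Lemma base_cycle_rank_lsubmx x : C0 x -> (\rank (lsubmx x) + a <= p)%N.
Proof.
move=> Cx; have half_neq0 : (2^-1 : C) != 0 by rewrite invr_eq0 pnatr_eq0.
have [L [A [B [s [uA uB e1 e2]]]]] := normal_form_pair (lsubmx x) (rsubmx x) half_neq0.
have hs := base_cycle_signature Cx (block_diag_unit uA uB) (blockdiag_block A B).
apply: (has_signature_posdef_rank hs (submxMl L _)) => u u0.
rewrite [in X in X *m block_mx _ _ _ _](esym (hsubmxK x)) mul_row_block_diag.
rewrite mul_mx_row !mulmxA e1 e2.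
by rewrite hform_pid_row_gt0 ?rank_leq_row ?half_conj_lt1.
Qed.

Lemma base_cycle_rank_rsubmx x : C0 x -> (\rank (rsubmx x) + (p - a) <= p)%N.
Proof.
move=> Cx; have half_neq0 : (2^-1 : C) != 0 by rewrite invr_eq0 pnatr_eq0.
have [L [A [B [s [uA uB e1 e2]]]]] := normal_form_pair (rsubmx x) (lsubmx x) half_neq0.
have hs := base_cycle_signature Cx (block_diag_unit uB uA) (blockdiag_block B A).
apply: (has_signature_negdef_rank hs (submxMl L _)) => u u0.
rewrite [in X in X *m block_mx _ _ _ _](esym (hsubmxK x)) mul_row_block_diag.
rewrite mul_mx_row !mulmxA e1 e2.
by rewrite hform_pid_row_lt0 ?rank_leq_col ?half_conj_lt1.
Qed.

End BaseCycle.
End BaseCycleBounds.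

Section OpenOrbit.
Variables (R : realType) (p q : nat).
Local Notation C := (R[i]).
Local Notation n := (p + q)%N.

Definition transversal_to (z x : 'M[C]_(p, n)) : Prop := row_free (col_mx z x).

Lemma transversal_open (z : 'M[C]_(p, n)) : Zopen (transversal_to z).
Proof.
move=> x /row_free_open[eps eps0 near_free]; exists eps; split=> // x' _ hx'.
apply: near_free => i j; case: (split_ordP i) => k ->.
  by rewrite !col_mxEu subrr normr0.
by rewrite !col_mxEd.
Qed.

Lemma transversal_open_orbit (z w : 'M[C]_(p, n)) : (0 < p)%N -> (p <= q)%N ->
  transversal_to z w -> is_open_orbit (isotropy z) (transversal_to z).
Proof.
move=> p0 pq tw; split; last exact: transversal_open.
have [_ fw] := row_free_col_mx tw.
exists w; split=> // x; split=> [tx|[fx [g [[dg ezg] exg]]]].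
  have [_ fx] := row_free_col_mx tx.
  have [g [dg ezg exg]] := transversal_pair_transitive (ltn_addr q p0)
    (leq_add (leqnn p) pq) tw tx.
  by split=> //; exists g.
have ug : g \in unitmx by rewrite unitmxE dg unitr1.
by rewrite /transversal_to /row_free (mxrank_col_mulmx ug ezg exg).
Qed.

(* An open Q_z-orbit contains a small perturbation of each of its points,   *)
(* hence a plane transversal to z, and transversality is Q_z-invariant.     *)
Lemma open_orbit_transversal (z w : 'M[C]_(p, n)) O : (p <= q)%N -> row_free z ->
  is_open_orbit (isotropy z) O -> O w -> transversal_to z w.
Proof.
move=> pq fz [[w1 [_ Ow1]] openO] Ow.
have [eps [eps0 nearO]] := openO w Ow.
have [w' near_w' tw'] := exists_near_col_mx_free w fz (leq_add (leqnn p) pq) eps0.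
have [_ fw'] := row_free_col_mx tw'.
have /Ow1[_ [g [[dg ezg] ewg]]] := Ow.
have /Ow1[_ [g' [[dg' ezg'] ewg']]] := nearO w' fw' near_w'.
have ug : g \in unitmx by rewrite unitmxE dg unitr1.
have ug' : g' \in unitmx by rewrite unitmxE dg' unitr1.
rewrite /transversal_to /row_free (mxrank_col_mulmx ug ezg ewg).
by rewrite -(mxrank_col_mulmx ug' ezg' ewg').
Qed.

End OpenOrbit.

Section Necessity.
Variables (R : realType) (p q a : nat).
Hypotheses (p_gt0 : (0 < p)%N) (pq : (p <= q)%N) (ap : (a <= p)%N).
Local Notation C := (R[i]).
Local Notation n := (p + q)%N.

Lemma dimension_count (l1 l2 r1 r2 lc rc : nat) :
  (p + p <= lc + rc)%N -> (lc <= l1 + l2)%N -> (rc <= r1 + r2)%N ->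
  (lc <= p)%N -> (rc <= q)%N -> (l1 + a <= p)%N -> (l2 + a <= p)%N ->
  (r1 + (p - a) <= p)%N -> (r2 + (p - a) <= p)%N -> (p <= 2 * a <= q)%N.
Proof. by move: ap => *; apply/andP; split; lia. Qed.

Lemma base_cycle_transversal_bound (C0 : 'M[C]_(p, n) -> Prop) z w :
  base_cycle a C0 -> C0 z -> C0 w -> transversal_to z w -> (p <= 2 * a <= q)%N.
Proof.
move=> bc Cz Cw /eqP tzw.
have := mxrank_hsub_leq (col_mx z w); rewrite tzw lsubmx_col rsubmx_col => hsub.
exact: (dimension_count hsub (mxrank_col_leq _ _) (mxrank_col_leq _ _)
  (rank_leq_col _) (rank_leq_col _)
  (base_cycle_rank_lsubmx p_gt0 bc Cz) (base_cycle_rank_lsubmx p_gt0 bc Cw)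
  (base_cycle_rank_rsubmx p_gt0 bc Cz) (base_cycle_rank_rsubmx p_gt0 bc Cw)).
Qed.

Lemma generically_1_connected_bound :
  generically_1_connected R p q a -> (p <= 2 * a <= q)%N.
Proof.
move=> [C0 [bc hO]]; have [[z0 [fz0 C0E]] _] := bc.
have Cz0 : C0 z0.
  apply/C0E; split=> //; exists 1%:M; split; first exact: inK0_1.
  by rewrite mulmx1; apply/eqmxP.
have [O [oO [w [Cw Ow]]]] := hO z0 Cz0.
exact: base_cycle_transversal_bound bc Cz0 Cw (open_orbit_transversal pq fz0 oO Ow).
Qed.

End Necessity.

Section Sufficiency.
Variables (R : realType) (p q a : nat).
Hypotheses (pq : (p <= q)%N) (ap : (a <= p)%N).
Local Notation C := (R[i]).
Local Notation n := (p + q)%N.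
Local Notation sgn := (@sgn R p q).

Let aq : (a <= q)%N := leq_trans ap pq.

Definition pos_coord (i : 'I_(p - a)) : 'I_n := lshift q (widen_ord (leq_subr a p) i).
Definition neg_coord (i : 'I_a) : 'I_n := rshift p (widen_ord aq i).
Definition pos_part := sel_mx C pos_coord.
Definition neg_part := sel_mx C neg_coord.
(* The p-plane spanned by e_1, ..., e_(p-a) and e_(p+1), ..., e_(p+a). *)
Definition base_point : 'M[C]_(p, n) :=
  castmx (subnK ap, erefl n) (col_mx pos_part neg_part).

Lemma pos_coord_inj : injective pos_coord.
Proof. by move=> x y /(congr1 val) /= h; apply: val_inj. Qed.

Lemma neg_coord_inj : injective neg_coord.
Proof. by move=> x y /(congr1 val) /= /addnI h; apply: val_inj. Qed.

Lemma pos_neg_coord_neq i j : pos_coord i != neg_coord j.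
Proof.
apply/eqP => /(congr1 val) /=; have := ltn_ord i; have := leq_subr a p; lia.
Qed.

Lemma base_point_eqmx : (base_point :=: col_mx pos_part neg_part)%MS.
Proof. exact: eqmx_cast. Qed.

Lemma base_point_free : row_free base_point.
Proof.
rewrite /row_free base_point_eqmx /pos_part /neg_part col_sel_mx.
rewrite (eqP (sel_mx_free _ _)) ?subnK //.
exact: cat_ordfun_inj pos_coord_inj neg_coord_inj pos_neg_coord_neq.
Qed.

Lemma base_point_signature : has_signature base_point (p - a) a.
Proof.
exists pos_part, neg_part; split; first exact: sel_mx_free pos_coord_inj.
split; first exact: sel_mx_free neg_coord_inj.
split; first by apply/eqmxP/eqmx_sym/base_point_eqmx.
split; [|split].
- move=> u v; rewrite hform_sel_mx sel_mx_Jmx.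
  have -> : \matrix_(i, k) ((pos_coord i == neg_coord k)%:R * sgn (neg_coord k)) = 0.
    by apply/matrixP => i k; rewrite !mxE (negbTE (pos_neg_coord_neq i k)) mul0r.
  by rewrite mulmx0 mul0mx mxE.
- move=> u hu; rewrite hform_sel_mx sel_mx_Jmx.
  have -> : \matrix_(i, k) ((pos_coord i == pos_coord k)%:R * sgn (pos_coord k))
      = 1%:M.
    apply/matrixP => i k; rewrite !mxE (inj_eq pos_coord_inj) /sgn /=.
    by rewrite (leq_trans (ltn_ord k) (leq_subr a p)) mulr1.
  by rewrite mulmx1 dotmx_gt0 //; apply: contraNneq hu => ->; rewrite mul0mx.
- move=> u hu; rewrite hform_sel_mx sel_mx_Jmx.
  have -> : \matrix_(i, k) ((neg_coord i == neg_coord k)%:R * sgn (neg_coord k))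
      = - 1%:M.
    apply/matrixP => i k; rewrite !mxE (inj_eq neg_coord_inj) /sgn /=.
    by rewrite ltnNge leq_addr /= mulrN1.
  rewrite mulmxN mulmx1 mulNmx mxE oppr_lt0 dotmx_gt0 //.
  by apply: contraNneq hu => ->; rewrite mul0mx.
Qed.

Lemma pos_part_row : pos_part = row_mx (pid_mx (p - a)) 0.
Proof.
apply/matrixP => i j; case: (split_ordP j) => k ->;
  rewrite ?row_mxEl ?row_mxEr !mxE /pos_coord ?eq_rlshift //.
by rewrite eq_lshift -val_eqE /= eq_sym ltn_ord andbT.
Qed.

Lemma neg_part_row : neg_part = row_mx 0 (pid_mx a).
Proof.
apply/matrixP => i j; case: (split_ordP j) => k ->;
  rewrite ?row_mxEl ?row_mxEr !mxE /neg_coord ?eq_lrshift //.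
by rewrite eq_rshift -val_eqE /= eq_sym ltn_ord andbT.
Qed.

(* Gram-Schmidt preserves the span of the leading rows, so K and K_0 have   *)
(* the same orbit through the base point.                                   *)
Lemma base_point_mul_inK (k : 'M[C]_n) : (0 < p)%N -> inK k ->
  exists2 k0, inK0 k0 & (base_point *m k == base_point *m k0)%MS.
Proof.
move=> p0 [dk /blockdiagE ek]; set A := ulsubmx k; set B := drsubmx k.
have dAB : \det A * \det B = 1 by move: dk; rewrite /inG ek det_ublock.
have /andP[uA uB] : (A \in unitmx) && (B \in unitmx).
  by rewrite !unitmxE -unitrM dAB unitr1.
set U := block_mx (schmidt A) 0 0 (schmidt B).
have uU : U \is unitarymx by apply: unitary_block; apply: schmidt_unitarymx.
have [c c0 K0cU] := inK0_rescale p0 uU (blockdiag_block _ _).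
exists (c *: U) => //; apply/eqmxP.
apply: eqmx_trans (eqmxMr k base_point_eqmx) _.
rewrite -scalemxAr; apply: eqmx_trans _ (eqmx_sym (eqmx_scale _ c0)).
apply: eqmx_trans _ (eqmx_sym (eqmxMr U base_point_eqmx)).
rewrite ek !mul_col_mx pos_part_row neg_part_row !mul_row_block_diag !mul0mx.
apply: eqmx_col_mx.
  by apply: eqmx_row_mx0; apply: eqmx_pid_schmidt (leq_subr a p) uA.
by apply: eqmx_row_0mx; apply: eqmx_pid_schmidt aq uB.
Qed.

Lemma base_cycle_base_point : (0 < p)%N ->
  base_cycle a (Defs.orbit (@inK0 R p q) base_point).
Proof.
move=> p0; split; first by exists base_point; split=> //; exact: base_point_free.
split=> [w [fw [g [[[dg hg] _] ew]]]|w g [fw [g1 [k1 ew]]] [dg bg]].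
  split=> //; apply: has_signature_eqmx ew _.
  apply: has_signature_mulmx hg base_point_signature.
  by rewrite unitmxE dg unitr1.
have ug : g \in unitmx by rewrite unitmxE dg unitr1.
split; first by rewrite /row_free mxrankMfree ?row_free_unit.
have kK : inK (g1 *m g).
  split; first by rewrite /inG det_mulmx dg mulr1; case: k1 => [[]].
  exact: blockdiagM (inK0_blockdiag k1) bg.
have [k0 k0K e0] := base_point_mul_inK p0 kK.
exists k0; split=> //; apply/eqmxP.
by apply: eqmx_trans (eqmxMr g (eqmxP ew)) _; rewrite -mulmxA; apply/eqmxP.
Qed.

Definition rev_blocks_val (j : nat) : nat :=
  if (j < p)%N then (p - 1 - j)%N else (p + (q - 1 - (j - p)))%N.

Lemma rev_blocks_val_lt (j : 'I_n) : (rev_blocks_val j < n)%N.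
Proof. by rewrite /rev_blocks_val; have := ltn_ord j; case: (ltnP j p) => h1 h2; lia. Qed.

Definition rev_blocks (j : 'I_n) : 'I_n := Ordinal (rev_blocks_val_lt j).

Lemma rev_blocks_inj : injective rev_blocks.
Proof.
move=> x y /(congr1 val); rewrite /= /rev_blocks_val => h; apply: ord_inj.
by move: h (ltn_ord x) (ltn_ord y); case: (ltnP x p); case: (ltnP y p); lia.
Qed.

Lemma rev_blocks_lt (j : 'I_n) : (rev_blocks j < p)%N = (j < p)%N.
Proof.
rewrite /= /rev_blocks_val; have := ltn_ord j; case: (ltnP j p) => h1 h2.
  by apply/idP; lia.
by apply/negbTE; rewrite -leqNgt leq_addr.
Qed.

Definition rev_mx : 'M[C]_n := sel_mx C rev_blocks.

Lemma rev_mx_unitary : rev_mx \is unitarymx.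
Proof.
apply/unitarymxP; rewrite /rev_mx sel_mx_mul_trmxC.
by apply/matrixP => i j; rewrite !mxE (inj_eq rev_blocks_inj).
Qed.

Lemma rev_mx_blockdiag : blockdiag rev_mx.
Proof.
move=> i j h; rewrite mxE; case: eqP => // e.
by rewrite e rev_blocks_lt eqxx in h.
Qed.

(* [rev_mx] maps e_1..e_(p-a) to e_(a+1)..e_p and e_(p+1)..e_(p+a) to      *)
(* e_(p+q-a+1)..e_(p+q), disjoint from the coordinates of the base point     *)
(* exactly when p <= 2a <= q.                                               *)
Lemma base_point_rev_transversal : (p <= 2 * a)%N -> (2 * a <= q)%N ->
  transversal_to base_point (base_point *m rev_mx).
Proof.
move=> le_p_2a le_2a_q; rewrite /transversal_to /row_free.
rewrite (mxrank_col_eqmx base_point_eqmx (eqmxMr rev_mx base_point_eqmx)).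
rewrite mul_col_mx /pos_part /neg_part /rev_mx !sel_mxM !col_sel_mx.
rewrite (eqP (sel_mx_free _ _)) ?subnK //.
have lt_p (x : 'I_(p - a)) : (x < p)%N by apply: leq_trans (ltn_ord x) (leq_subr a p).
apply: cat_ordfun_inj.
- exact: cat_ordfun_inj pos_coord_inj neg_coord_inj pos_neg_coord_neq.
- apply: cat_ordfun_inj; [exact: inj_comp rev_blocks_inj pos_coord_inj|
    exact: inj_comp rev_blocks_inj neg_coord_inj|].
  move=> i j; apply/eqP => /(congr1 val); rewrite /= /rev_blocks_val /=.
  by rewrite lt_p ltnNge leq_addr /= addKn; have := ltn_ord i; lia.
- move=> i j; rewrite /cat_ordfun.
  case: (split_ordP i) => i' _; case: (split_ordP j) => j' _;
  apply/eqP => /(congr1 val);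
  rewrite /= /rev_blocks_val /= ?lt_p ?ltnNge ?leq_addr /= ?addKn;
  have := ltn_ord i'; have := ltn_ord j'; lia.
Qed.

Lemma generically_1_connected_of_bound : (0 < p)%N -> (p <= 2 * a)%N ->
  (2 * a <= q)%N -> generically_1_connected R p q a.
Proof.
move=> p0 le_p_2a le_2a_q.
have [c c0 K0s] := inK0_rescale p0 rev_mx_unitary rev_mx_blockdiag.
exists (Defs.orbit (@inK0 R p q) base_point); split.
  exact: base_cycle_base_point.
move=> z [fz [g [K0g ez]]].
have ug : g \in unitmx by case: K0g => [[dg _] _]; rewrite unitmxE dg unitr1.
set w := base_point *m (c *: rev_mx) *m g.
have tzw : transversal_to z w.
  rewrite /transversal_to /row_free (mxrank_col_eqmx (eqmxP ez) (eqmx_refl w)).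
  rewrite /w -mul_col_mx mxrankMfree ?row_free_unit // -scalemxAr.
  rewrite (mxrank_col_eqmx (eqmx_refl _) (eqmx_scale _ c0)).
  exact: base_point_rev_transversal le_p_2a le_2a_q.
exists (transversal_to z); split; first exact: transversal_open_orbit p0 pq tzw.
have [_ fw] := row_free_col_mx tzw.
exists w; split=> //; split=> //; exists (c *: rev_mx *m g); split.
  exact: inK0M.
by rewrite mulmxA; apply/eqmxP.
Qed.

End Sufficiency.

Theorem theorem3p4 (R : realType) (p q a : nat) :
  (1 <= p)%N -> (p <= q)%N -> (a <= p)%N ->
  (generically_1_connected R p q a <-> (p <= 2 * a <= q)%N).
Proof.
move=> p_gt0 pq ap; split; first exact: generically_1_connected_bound.
by case/andP; apply: generically_1_connected_of_bound.
Qed.
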